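(* Let $V$ be a vector space of odd dimension $n$ over a field $\mathbb{F}$ with an alternating bilinear form $\mathsf{s}$ of maximal rank, $p$ a $1$-dimensional subspace with $p\cap\mathrm{Rad}(V)=0$, and $H$ a complement of $p$ in $V$ containing $\mathrm{Rad}(V)$. Then every triangle of $\Pi(p,H)$ is null-homotopic.
   Context: $\mathrm{Rad}(U)=U\cap U^\perp$; maximal rank means $\dim\mathrm{Rad}(V)\le1$. $\Pi(p,H)$: its objects are the subspaces $U\le H$ with $1\le\dim U\le n-2$ such that $\mathrm{Rad}(V)\not\subseteq U$, $\dim\mathrm{Rad}(U)\le 2$, and either $\mathrm{Rad}(U)=0$ or $\mathrm{Rad}(U)\not\subseteq p^\perp$; the type of $U$ is $\dim U$; points are objects of type 1, lines are objects of type 2. For objects $U\ne W$ with $\dim U<\dim W$, they are incident iff either $\dim W$ is odd and $U\subseteq W$, or $\dim W$ is even, $U\subseteq W$ and $U\cap\mathrm{Rad}(W\cap p^\perp)=0$. A path is a sequence of objects, consecutive ones incident and distinct; a triangle is a closed path $p_1,L_1,p_2,L_2,p_3,L_3,p_1$ with $p_i$ points and $L_i$ lines. A closed path is null-homotopic if it can be reduced to the trivial path by repeatedly inserting or removing closed paths of length $2$ or $3$. *)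

From HB Require Import structures.
From mathcomp Require Import all_boot all_order all_algebra.
From mathcomp Require Import sesquilinear.
From Stdlib Require Import Relations.

Set Implicit Arguments.
Unset Strict Implicit.
Unset Printing Implicit Defensive.

Import Order.TTheory GRing.Theory Num.Theory.
Local Open Scope ring_scope.

Section Pi.
Variables (F : fieldType) (vT : vectType F) (s : {skew_symmetric vT}).

Definition perp (U : {vspace vT}) : {vspace vT} := orthov s U.

Definition Rad (U : {vspace vT}) : {vspace vT} := (U :&: perp U)%VS.

Definition is_obj (p H U : {vspace vT}) : bool :=
  [&& (U <= H)%VS,
      (1 <= \dim U)%N, (\dim U <= (\dim {:vT}) - 2)%N,
      ~~ (Rad fullv <= U)%VS,
      (\dim (Rad U) <= 2)%N &
      (Rad U == 0%VS) || ~~ (Rad U <= perp p)%VS].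

(* incidence for dim U < dim W (W the bigger object) *)
Definition inc_lt (p U W : {vspace vT}) : bool :=
  if odd (\dim W) then (U <= W)%VS
  else (U <= W)%VS && ((U :&: Rad (W :&: perp p)) == 0)%VS.

Definition incident (p U W : {vspace vT}) : bool :=
  (U != W) &&
  ((\dim U < \dim W)%N && inc_lt p U W || (\dim W < \dim U)%N && inc_lt p W U).

Definition adj (p H : {vspace vT}) : rel {vspace vT} :=
  fun U W => [&& is_obj p H U, is_obj p H W & incident p U W].

(* A path is x :: c with path (adj p H) x c; it is closed when last x c = x. *)

Definition insert_step (p H : {vspace vT}) (P Q : seq {vspace vT}) : Prop :=
  exists (a b d : seq {vspace vT}) (x : {vspace vT}),
    [/\ P = a ++ x :: b, Q = a ++ x :: d ++ b,
        (size d == 2)%N || (size d == 3)%N,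
        path (adj p H) x d & last x d = x].

Definition homotopy_step (p H : {vspace vT}) (P Q : seq {vspace vT}) : Prop :=
  insert_step p H P Q \/ insert_step p H Q P.

Definition null_homotopic (p H : {vspace vT}) (x : {vspace vT})
    (c : seq {vspace vT}) : Prop :=
  clos_refl_trans _ (homotopy_step p H) (x :: c) [:: x].

Definition is_triangle (p H : {vspace vT}) (x : {vspace vT})
    (c : seq {vspace vT}) : Prop :=
  exists p1 p2 p3 L1 L2 L3 : {vspace vT},
    [/\ x = p1, c = [:: L1; p2; L2; p3; L3; p1],
        path (adj p H) x c,
        [/\ \dim p1 = 1%N, \dim p2 = 1%N & \dim p3 = 1%N] &
        [/\ \dim L1 = 2%N, \dim L2 = 2%N & \dim L3 = 2%N]].

End Pi.

(* By parity, dim Rad(U) = dim U (mod 2); hence R := Rad(V) is a line, and since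
   H has even dimension n - 1 its radical contains a vector h0 with s(h0, p) <> 0.
   A closed path all of whose vertices lie in one odd-dimensional object W is
   contractible, being a cone with apex W.  Triangles with repeated or collinear
   points retract onto backtracking paths.  Otherwise the points <u1>, <u2>, <u3>
   span a 3-space T.  If R is not in T, then T is an object or, when n >= 7, it
   extends by one or two vectors of H to a 5-dimensional object (for n = 5, T is
   forced to be an object).  If R is in T, there is a point <v> such that every
   side L of the triangle spans a plane object L + <v>, and the triangle splits
   into three cones around <v>. *)

From HB Require Import structures.
From mathcomp Require Import all_boot all_order all_algebra.
From mathcomp Require Import sesquilinear.
From mathcomp Require Import ring.
From Stdlib Require Import Relations.

Set Implicit Arguments.
Unset Strict Implicit.
Unset Printing Implicit Defensive.

Import Order.TTheory GRing.Theory Num.Theory.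
Local Open Scope ring_scope.

Ltac field_nz := field; do ?[apply/andP; split]; assumption.

(** * Subspaces spanned by a few vectors *)

Section VectorSpaces.
Variables (F : fieldType) (vT : vectType F).
Implicit Types (U V L P Q : {vspace vT}) (u v : vT).

Lemma memv_addl U V u : u \in U -> u \in (U + V)%VS.
Proof. exact: (subvP (addvSl U V)). Qed.

Lemma memv_addr U V v : v \in V -> v \in (U + V)%VS.
Proof. exact: (subvP (addvSr U V)). Qed.

Lemma memv_line_addl u v : u \in (<[u]> + <[v]>)%VS.
Proof. exact/memv_addl/memv_line. Qed.

Lemma memv_line_addr u v : v \in (<[u]> + <[v]>)%VS.
Proof. exact/memv_addr/memv_line. Qed.

Lemma dim_addv_line U v : v \notin U -> \dim (U + <[v]>) = (\dim U).+1.
Proof.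
move=> vU; have v0 : v != 0 by apply: contraNneq vU => ->; rewrite mem0v.
rewrite dimv_disjoint_sum ?dim_vline ?v0 ?addn1 //.
apply/eqP; rewrite -subv0; apply/subvP => y /memv_capP [yU /vlineP [k yk]].
rewrite memv0 yk; have [->|k0] := eqVneq k 0; first by rewrite scale0r.
by move: vU; rewrite -(scalerK k0 v) -yk memvZ.
Qed.

Lemma dim_addv_line_le U v : (\dim (U + <[v]>) <= (\dim U).+1)%N.
Proof.
apply: leq_trans (dimv_add_leqif U <[v]>).1 _.
by rewrite dim_vline -addn1 leq_add2l leq_b1.
Qed.

Lemma dim_addv_vline_le2 u v : (\dim (<[u]> + <[v]>) <= 2)%N.
Proof. by rewrite (leq_trans (dim_addv_line_le _ _)) // ltnS dim_vline leq_b1. Qed.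

Lemma dim_addv_vline3_le3 u v w : (\dim (<[u]> + <[v]> + <[w]>) <= 3)%N.
Proof. by rewrite (leq_trans (dim_addv_line_le _ _)) // ltnS dim_addv_vline_le2. Qed.

Lemma subv_addv_vline3 u v w :
  let W := (<[u]> + <[v]> + <[w]>)%VS in
  [/\ <[u]> <= W, <[v]> <= W & <[w]> <= W]%VS /\
  [/\ <[u]> + <[v]> <= W, <[u]> + <[w]> <= W & <[v]> + <[w]> <= W]%VS.
Proof.
move=> W; have uW : u \in W by apply/memv_addl/memv_addl/memv_line.
have vW : v \in W by apply/memv_addl/memv_addr/memv_line.
have wW : w \in W by apply/memv_addr/memv_line.
by rewrite !subv_add -!memvE uW vW wW.
Qed.

Lemma dim_addv_line2_le U v w : (\dim (U + <[v]> + <[w]>) <= (\dim U).+2)%N.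
Proof. by rewrite (leq_trans (dim_addv_line_le _ _)) // ltnS dim_addv_line_le. Qed.

Lemma dim_vline2 u v : u != 0 -> v \notin <[u]>%VS -> \dim (<[u]> + <[v]>) = 2%N.
Proof. by move=> u0 vu; rewrite dim_addv_line // dim_vline u0. Qed.

Lemma vline_notin_sym u v : u != 0 -> v \notin <[u]>%VS -> u \notin <[v]>%VS.
Proof.
move=> u0 vu; apply/negP => /vlineP [c uc].
have c0 : c != 0 by apply: contraNneq u0 => c0; rewrite uc c0 scale0r.
by move: vu; rewrite -(scalerK c0 v) -uc memvZ ?memv_line.
Qed.

Lemma vspace_dim1E P : \dim P = 1%N -> P = <[vpick P]>%VS.
Proof.
move=> dP; have P0 : vpick P != 0 by rewrite vpick0 -dimv_eq0 dP.
by apply/eqP; rewrite eq_sym eqEdim -memvE memv_pick dim_vline P0 dP.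
Qed.

Lemma vspace_dim2_uniq P Q L (L' : {vspace vT}) :
  P != Q -> \dim P = 1%N -> \dim Q = 1%N ->
  (P <= L)%VS -> (Q <= L)%VS -> (P <= L')%VS -> (Q <= L')%VS ->
  \dim L = 2%N -> \dim L' = 2%N -> L = L'.
Proof.
move=> PQ dP dQ PL QL PL' QL' dL dL'.
have PQ0 : (P :&: Q)%VS = 0%VS.
  apply: contraNeq PQ; rewrite -dimv_eq0 -lt0n => dPQ.
  have eP : (P :&: Q)%VS = P by apply/eqP; rewrite eqEdim capvSl dP.
  have eQ : (P :&: Q)%VS = Q by apply/eqP; rewrite eqEdim capvSr dQ.
  by rewrite -eP eQ.
have dPQ : \dim (P + Q) = 2%N by rewrite dimv_disjoint_sum // dP dQ.
have eL : (P + Q)%VS = L by apply/eqP; rewrite eqEdim subv_add PL QL dL dPQ.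
have eL' : (P + Q)%VS = L' by apply/eqP; rewrite eqEdim subv_add PL' QL' dL' dPQ.
by rewrite -eL eL'.
Qed.

Lemma vpick_notin P Q : P != Q -> \dim P = 1%N -> \dim Q = 1%N -> vpick Q \notin P.
Proof.
move=> PQ dP dQ; apply: contra PQ => QP; rewrite eq_sym eqEdim dP dQ andbT.
by rewrite {1}(vspace_dim1E dQ) -memvE.
Qed.

Lemma line_through P Q L : P != Q -> \dim P = 1%N -> \dim Q = 1%N ->
  (P <= L)%VS -> (Q <= L)%VS -> \dim L = 2%N -> L = (<[vpick P]> + <[vpick Q]>)%VS.
Proof.
move=> PQ dP dQ PL QL dL; have P0 : vpick P != 0 by rewrite vpick0 -dimv_eq0 dP.
have PM : (P <= <[vpick P]> + <[vpick Q]>)%VS by rewrite {1}(vspace_dim1E dP) addvSl.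
have QM : (Q <= <[vpick P]> + <[vpick Q]>)%VS by rewrite {1}(vspace_dim1E dQ) addvSr.
have dM : \dim (<[vpick P]> + <[vpick Q]>) = 2%N.
  by rewrite dim_vline2 // -(vspace_dim1E dP) vpick_notin.
exact: vspace_dim2_uniq PQ dP dQ PL QL PM QM dL dM.
Qed.

End VectorSpaces.

(** * Alternating forms *)

Section AlternatingForms.
Variables (F : fieldType) (vT : vectType F) (s : {skew_symmetric vT}).
Hypothesis s_alt : forall v : vT, s v v = 0.
Implicit Types (U V W : {vspace vT}) (u v x y : vT).

Lemma skew_formC u v : s u v = - s v u.
Proof. by rewrite hermC /= expr1 mulN1r. Qed.

Lemma orthovS U V : (U <= V)%VS -> (orthov s V <= orthov s U)%VS.
Proof.
move=> UV; apply/subvP => x /mem_orthovP xV; apply/mem_orthovP => y yU.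
exact/xV/(subvP UV).
Qed.

Lemma mem_orthovD U V x :
  (x \in orthov s (U + V)) = (x \in orthov s U) && (x \in orthov s V).
Proof. by rewrite !mem_orthov_sym subv_add. Qed.

Lemma memv_Rad U x : (x \in Rad s U) = (x \in U) && (x \in orthov s U).
Proof. by rewrite memv_cap. Qed.

Lemma Rad_subv U : (Rad s U <= U)%VS.
Proof. exact: capvSl. Qed.

Lemma dim_cap_orthov_pair W x y : x \in W -> y \in W -> s x y != 0 ->
  (\dim (W :&: orthov s <[x]> :&: orthov s <[y]>)).+2 = \dim W.
Proof.
move=> xW yW xy.
have xWx : x \in (W :&: orthov s <[x]>)%VS.
  by rewrite memv_cap xW mem_orthov1 s_alt eqxx.
have x0 : x != 0 by apply: contraNneq xy => ->; rewrite linear0l.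
have xWo : x \notin orthov s W by apply/mem_orthovPn; exists y.
have yWo : y \notin orthov s (W :&: orthov s <[x]>).
  by apply/mem_orthovPn; exists x => //; rewrite herm_eq0C.
have dWx : (0 < \dim (W :&: orthov s <[x]>))%N.
  by rewrite lt0n dimv_eq0; apply: contraTneq xWx => ->; rewrite memv0.
rewrite -(eq_dim_orthov1 yWo) prednK // -(eq_dim_orthov1 xWo) prednK //.
by rewrite lt0n dimv_eq0; apply: contraTneq xW => ->; rewrite memv0.
Qed.

Lemma Rad_cap_orthov_pair U x y : x \in U -> y \in U -> s x y != 0 ->
  Rad s (U :&: orthov s <[x]> :&: orthov s <[y]>) = Rad s U.
Proof.
move=> xU yU xy; set U' := (U :&: _ :&: _)%VS.
have yx : s y x != 0 by rewrite herm_eq0C.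
have U'U : (U' <= U)%VS by rewrite /U' -capvA capvSl.
have memU' w : (w \in U') = [&& w \in U, s w x == 0 & s w y == 0].
  by rewrite !memv_cap !mem_orthov1 andbA.
apply/vspaceP => w; rewrite !memv_Rad.
apply/andP/andP => [[wU' /mem_orthovP wo]|[wU wo]].
  move: (wU'); rewrite memU' => /and3P [wU /eqP wx /eqP wy]; split => //.
  apply/mem_orthovP => u uU.
  (* project [u] to [U'] along the hyperbolic pair [x, y] *)
  pose u' := u - (s u y / s x y) *: x - (s u x / s y x) *: y.
  have u'U' : u' \in U'.
    rewrite memU' !rpredB ?memvZ //= !linearBl /= !linearZl_LR /= !s_alt.
    by apply/andP; split; apply/eqP; field_nz.
  have := wo _ u'U'.
  by rewrite !linearBr /= !linearZr_LR /= wx wy !mulr0 !subr0.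
split; first by move/mem_orthovP: (wo) => wo'; rewrite memU' wU !wo' ?eqxx.
exact: subvP (orthovS U'U) _ wo.
Qed.

Lemma odd_dim_Rad U : odd (\dim (Rad s U)) = odd (\dim U).
Proof.
move: {2}(\dim U) (leqnn (\dim U)) => k; elim: k U => [|k IH] U leUk.
  by move: leUk; rewrite leqn0 dimv_eq0 => /eqP ->; rewrite /Rad cap0v.
have [UU|/subvPn [x xU /mem_orthovPn [y yU xy]]] := boolP (U <= orthov s U)%VS.
  by rewrite /Rad /perp (capv_idPl UU).
have dU := dim_cap_orthov_pair xU yU xy.
have leU'k : (\dim (U :&: orthov s <[x]> :&: orthov s <[y]>) <= k)%N.
  by move: leUk; rewrite -dU ltnS => /ltnW.
by rewrite -(Rad_cap_orthov_pair xU yU xy) IH // -dU /= negbK.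
Qed.

Lemma dim_Rad_pair U x y : x \in U -> y \in U -> s x y != 0 ->
  ((\dim (Rad s U)).+2 <= \dim U)%N.
Proof.
move=> xU yU xy; rewrite -(Rad_cap_orthov_pair xU yU xy).
by rewrite -(dim_cap_orthov_pair xU yU xy) ltnS ltnS dimvS ?Rad_subv.
Qed.

Lemma memv_orthov_pair_shift W w y x : w \in W -> x \in W -> s w y != 0 ->
  s x w = 0 ->
  x - (s x y / s w y) *: w \in (W :&: orthov s <[w]> :&: orthov s <[y]>)%VS.
Proof.
move=> wW xW wy xw; rewrite !memv_cap rpredB ?memvZ //= !mem_orthov1.
rewrite !linearBl /= !linearZl_LR /= xw s_alt mulr0 subrr eqxx /=.
by apply/eqP; field_nz.
Qed.

Lemma mem_orthov_orthov_span (X : seq vT) t :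
  t \in orthov s (orthov s <<X>>) -> t \in (<<X>> + Rad s fullv)%VS.
Proof.
elim: X t => [|x X IH] t.
  by rewrite span_nil orthov0 add0v memv_Rad memvf.
have incl : (<<X>> + Rad s fullv <= <[x]> + <<X>> + Rad s fullv)%VS.
  by rewrite addvS // addvSr.
rewrite span_cons => /mem_orthovP ht.
have [/mem_orthovP hx|/mem_orthovPn [y1 y1X xy1]] :=
  boolP (x \in orthov s (orthov s <<X>>)).
  apply/(subvP incl)/IH/mem_orthovP => y yX; apply: ht.
  by rewrite mem_orthovD mem_orthov1 herm_eq0C hx ?eqxx.
(* subtract from [t] the multiple of [x] that makes it orthogonal to [y1] *)
pose c := s t y1 / s x y1.
have tcx : t - c *: x \in orthov s (orthov s <<X>>).
  apply/mem_orthovP => y yX.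
  pose y' := y - (s x y / s x y1) *: y1.
  have y'o : y' \in orthov s (<[x]> + <<X>>).
    rewrite mem_orthovD (rpredB yX (memvZ _ y1X)) andbT mem_orthov1 herm_eq0C.
    by rewrite linearBr /= linearZr_LR /=; apply/eqP; field_nz.
  have /eqP := ht _ y'o; rewrite linearBr /= linearZr_LR /= subr_eq0 => /eqP ty.
  by rewrite linearBl /= linearZl_LR /= ty /c; field_nz.
rewrite -(subrK (c *: x) t) rpredD //; first exact/(subvP incl)/IH.
by apply/memv_addl/memv_addl; rewrite memvZ ?memv_line.
Qed.

End AlternatingForms.

(** * Homotopy of closed paths *)

Section Homotopy.
Variables (F : fieldType) (vT : vectType F) (s : {skew_symmetric vT}).
Variables (p H : {vspace vT}).

Local Notation adj := (adj s p H).
Local Notation hrel := (clos_refl_trans _ (homotopy_step s p H)).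

Lemma adjC U W : adj U W = adj W U.
Proof.
rewrite /adj /incident eq_sym orbC.
by case: (is_obj s p H U); case: (is_obj s p H W).
Qed.

Lemma hrel_sym P Q : hrel P Q -> hrel Q P.
Proof.
elim=> [{}P {}Q [h|h]|{}P|P1 P2 P3 _ h12 _ h23].
- by apply: rt_step; right.
- by apply: rt_step; left.
- exact: rt_refl.
- exact: rt_trans h23 h12.
Qed.

Lemma insert_step_cat a b P Q : insert_step s p H P Q ->
  insert_step s p H (a ++ P ++ b) (a ++ Q ++ b).
Proof.
case=> a0 [b0 [d [x [-> -> hd hp hl]]]].
by exists (a ++ a0), (b0 ++ b), d, x; split; rewrite // -!catA //= -catA.
Qed.

Lemma hrel_cat a b P Q : hrel P Q -> hrel (a ++ P ++ b) (a ++ Q ++ b).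
Proof.
elim=> [{}P {}Q [h|h]|{}P|P1 P2 P3 _ h12 _ h23].
- by apply: rt_step; left; apply: insert_step_cat.
- by apply: rt_step; right; apply: insert_step_cat.
- exact: rt_refl.
- exact: rt_trans h12 h23.
Qed.

Lemma hrel_catl a P Q : hrel P Q -> hrel (a ++ P) (a ++ Q).
Proof. by move/(hrel_cat a [::]); rewrite !cats0. Qed.

Lemma hrel_backtrack x y b : adj x y -> hrel (x :: y :: x :: b) (x :: b).
Proof.
move=> xy; apply: rt_step; right.
by exists [::], b, [:: y; x], x; split; rewrite //= xy adjC xy.
Qed.

Lemma hrel_shortcut x y z b : adj x y -> adj y z -> adj z x ->
  hrel (x :: y :: z :: b) (x :: z :: b).
Proof.
move=> xy yz zx; apply: hrel_sym.
apply: (@rt_trans _ _ _ (x :: y :: z :: x :: z :: b)).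
  apply: rt_step; left; exists [::], (z :: b), [:: y; z; x], x.
  by split; rewrite //= xy yz zx.
exact: (hrel_catl [:: x; y]) (hrel_backtrack _ zx).
Qed.

Lemma hrel_cone_open W x c b : path adj x c -> all (adj ^~ W) (x :: c) ->
  hrel (x :: c ++ b) (x :: W :: last x c :: b).
Proof.
elim: c x => [|y c IH] x /=.
  by move=> _ /andP [xW _]; apply/hrel_sym/hrel_backtrack.
case/andP => xy yc /and3P [xW yW cW].
apply: (@rt_trans _ _ _ (x :: y :: W :: last y c :: b)).
  by apply: (hrel_catl [:: x]); apply: IH; rewrite //= yW.
by apply: hrel_shortcut; rewrite // adjC.
Qed.

Lemma hrel_cone W a x c b : path adj x c -> last x c = x ->
  all (adj ^~ W) (x :: c) -> hrel (a ++ x :: c ++ b) (a ++ x :: b).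
Proof.
move=> xc cx cW; apply: hrel_catl.
apply: rt_trans (hrel_cone_open b xc cW) _; rewrite cx.
by apply: hrel_backtrack; case/andP: cW.
Qed.

Lemma hrel_insert_detour a x y z b : adj x y -> adj y z ->
  hrel (a ++ x :: b) (a ++ x :: y :: z :: y :: x :: b).
Proof.
move=> xy yz; apply: hrel_catl.
apply: (@rt_trans _ _ _ (x :: y :: x :: b)); first exact/hrel_sym/hrel_backtrack.
exact: (hrel_catl [:: x]) (hrel_sym (hrel_backtrack _ yz)).
Qed.

Lemma hrel_square x y z w : path adj x [:: y; z; w; x] -> x = z \/ y = w ->
  hrel [:: x; y; z; w; x] [:: x].
Proof.
case/and5P => xy yz zw wx _ [xz|yw]; [subst z | subst w].
  by apply: rt_trans (hrel_backtrack _ xy) (hrel_backtrack _ zw).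
by apply: rt_trans (hrel_catl [:: x] (hrel_backtrack _ yz)) (hrel_backtrack _ xy).
Qed.

(* The spokes [Pi, Mi, Pv] cut the hexagon into three sectors, each coned off. *)
Lemma hrel_hexagon P1 L1 P2 L2 P3 L3 Pv M1 M2 M3 W1 W2 W3 :
  path adj P1 [:: L1; P2; L2; P3; L3; P1] ->
  [/\ adj P1 M1, adj P2 M2 & adj P3 M3] -> [/\ adj M1 Pv, adj M2 Pv & adj M3 Pv] ->
  all (adj ^~ W1) [:: Pv; M1; P1; L1; P2; M2; Pv] ->
  all (adj ^~ W2) [:: Pv; M2; P2; L2; P3; M3; Pv] ->
  all (adj ^~ W3) [:: P1; M1; Pv; M3; P3; L3; P1] ->
  hrel [:: P1; L1; P2; L2; P3; L3; P1] [:: P1].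
Proof.
move=> /and5P [a1 a2 a3 a4 /andP [a5 /andP [a6 _]]] [b1 b2 b3] [c1 c2 c3] w1 w2 w3.
have s1 := hrel_insert_detour [::] [:: L1; P2; L2; P3; L3; P1] b1 c1.
have s2 := hrel_insert_detour [:: P1; M1; Pv; M1; P1; L1] [:: L2; P3; L3; P1] b2 c2.
have s3 := hrel_insert_detour
  [:: P1; M1; Pv; M1; P1; L1; P2; M2; Pv; M2; P2; L2] [:: L3; P1] b3 c3.
apply: rt_trans s1 _; apply: rt_trans s2 _; apply: rt_trans s3 _ => /=.
have p1 : path adj Pv [:: M1; P1; L1; P2; M2; Pv].
  by rewrite /= adjC c1 adjC b1 a1 a2 b2 c2.
have p2 : path adj Pv [:: M2; P2; L2; P3; M3; Pv].
  by rewrite /= adjC c2 adjC b2 a3 a4 b3 c3.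
have p3 : path adj P1 [:: M1; Pv; M3; P3; L3; P1].
  by rewrite /= b1 c1 adjC c3 adjC b3 a5 a6.
apply: rt_trans (hrel_cone [:: P1; M1] [:: M2; P2; L2; P3; M3; Pv; M3; P3; L3; P1]
  p1 erefl w1) _.
apply: rt_trans (hrel_cone [:: P1; M1] [:: M3; P3; L3; P1] p2 erefl w2) _.
exact: (hrel_cone [::] [::] p3 erefl w3).
Qed.

End Homotopy.

(** * The geometry of objects of Pi(p, H) *)

Section Geometry.
Variables (F : fieldType) (vT : vectType F) (s : {skew_symmetric vT}).
Variables (p H : {vspace vT}).
Hypothesis s_alt : forall v : vT, s v v = 0.
Hypothesis odd_n : odd (\dim {:vT}).
Hypothesis dim_R_le1 : (\dim (Rad s fullv) <= 1)%N.
Hypothesis dim_p : \dim p = 1%N.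
Hypothesis addv_pH : (p + H = fullv)%VS.
Hypothesis capv_pH : (p :&: H = 0)%VS.
Hypothesis R_sub_H : (Rad s fullv <= H)%VS.
Implicit Types (U W L : {vspace vT}) (u v x y : vT).

Local Notation R := (Rad s fullv).
Local Notation n := (\dim {:vT}).
Local Notation e := (vpick p).
Local Notation adj := (adj s p H).
Local Notation is_obj := (is_obj s p H).
Local Notation hrel := (clos_refl_trans _ (homotopy_step s p H)).

Lemma p_vline : p = <[e]>%VS.
Proof. exact: vspace_dim1E. Qed.

Lemma mem_perp_p x : (x \in perp s p) = (s x e == 0).
Proof. by rewrite /perp {1}p_vline mem_orthov1. Qed.

Lemma nonperp_neq0 x : s x e != 0 -> x != 0.
Proof. by apply: contraNneq => ->; rewrite linear0l. Qed.

Lemma dim_R : \dim R = 1%N.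
Proof.
have := odd_dim_Rad s_alt fullv; rewrite odd_n.
by move: dim_R_le1; case: (\dim R) => [|[]].
Qed.

Lemma R_neq0 : vpick R != 0.
Proof. by rewrite vpick0 -dimv_eq0 dim_R. Qed.

Lemma R_orthl x y : x \in R -> s x y = 0.
Proof. by rewrite memv_Rad => /andP [_ /mem_orthovP]; apply; rewrite memvf. Qed.

Lemma R_orthr x y : x \in R -> s y x = 0.
Proof. by move/(R_orthl y) => xy; rewrite skew_formC xy oppr0. Qed.

Lemma R_sub_orthov U : (R <= orthov s U)%VS.
Proof. by apply/subvP => x xR; apply/mem_orthovP => y _; apply: R_orthl. Qed.

Lemma R_subv_of_mem x U : x \in R -> x != 0 -> x \in U -> (R <= U)%VS.
Proof.
move=> xR x0 xU; suff -> : R = <[x]>%VS by rewrite -memvE.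
by apply/eqP; rewrite eq_sym eqEdim -memvE xR dim_vline x0 dim_R.
Qed.

Lemma mem_R_notsubv x U : ~~ (R <= U)%VS -> x \in R -> x \in U -> x = 0.
Proof.
by move=> RU xR xU; apply: contraNeq RU => x0; apply: R_subv_of_mem xR x0 xU.
Qed.

Lemma dim_H : n = (\dim H).+1.
Proof. by have := dimv_disjoint_sum capv_pH; rewrite addv_pH dim_p. Qed.

Lemma Rad_H_perp_sub_R x : x \in Rad s H -> s x e = 0 -> x \in R.
Proof.
rewrite memv_Rad => /andP [xH /mem_orthovP xo] xe.
rewrite memv_Rad memvf; apply/mem_orthovP => v _.
have /memv_addP [a] : v \in (p + H)%VS by rewrite addv_pH memvf.
rewrite {1}p_vline => /vlineP [k ->] [h hH ->].
by rewrite linearDr /= linearZr_LR /= xe xo // mulr0 addr0.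
Qed.

(* [H] has even dimension [n - 1], so [Rad H] cannot be the odd-dimensional [R]. *)
Lemma exists_Rad_H_nonperp : exists2 h0, h0 \in Rad s H & s h0 e != 0.
Proof.
have [RHp|/subvPn [h0 h0RH]] := boolP (Rad s H <= perp s p)%VS; last first.
  by rewrite mem_perp_p => h0e; exists h0.
suff RH : Rad s H = R.
  have := odd_dim_Rad s_alt H; rewrite RH odd_dim_Rad // odd_n.
  by move: odd_n; rewrite dim_H /= => /negPf ->.
apply/vspaceP => x; apply/idP/idP => [xRH|xR].
  by apply: Rad_H_perp_sub_R => //; apply/eqP; rewrite -mem_perp_p (subvP RHp).
by rewrite memv_Rad (subvP R_sub_H) //= (subvP (R_sub_orthov H)).
Qed.

Lemma Rad_nonperp_cond W x : x \in Rad s W -> s x e != 0 ->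
  (Rad s W == 0%VS) || ~~ (Rad s W <= perp s p)%VS.
Proof.
move=> xW xe; apply/orP; right; apply/negP => /subvP /(_ _ xW).
by rewrite mem_perp_p (negPf xe).
Qed.

Lemma R_notsubv_of_Rad W x : (\dim (Rad s W) <= 1)%N -> x \in Rad s W ->
  s x e != 0 -> ~~ (R <= W)%VS.
Proof.
move=> dRW xRW xe; apply/negP => RW.
have RRW : (R <= Rad s W)%VS by rewrite subv_cap RW R_sub_orthov.
have /eqP RWE : R == Rad s W by rewrite eqEdim RRW dim_R.
by move: xe; rewrite -RWE in xRW; rewrite R_orthl ?eqxx.
Qed.

Lemma is_obj_of_Rad W x : (W <= H)%VS -> (\dim W <= n - 2)%N ->
  (\dim (Rad s W) <= 1)%N -> x \in Rad s W -> s x e != 0 -> is_obj W.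
Proof.
move=> WH dW dRW xRW xe; have xW := subvP (Rad_subv s W) _ xRW.
apply/and5P; split => //.
- by rewrite lt0n dimv_eq0; apply: contraTneq xW => ->; rewrite memv0 nonperp_neq0.
- exact: R_notsubv_of_Rad xRW xe.
- by rewrite (leq_trans dRW) // (Rad_nonperp_cond xRW xe).
Qed.

Lemma Rad_vline u : Rad s <[u]> = <[u]>%VS.
Proof. by apply/capv_idPl; rewrite -memvE mem_orthov1 s_alt. Qed.

Lemma is_obj_vline u : (3 <= n)%N -> u \in H -> s u e != 0 -> is_obj <[u]>.
Proof.
move=> n3 uH ue; have u0 := nonperp_neq0 ue.
have uRu : u \in Rad s <[u]> by rewrite Rad_vline memv_line.
apply: is_obj_of_Rad uRu ue; rewrite ?Rad_vline ?dim_vline ?u0 -?memvE //.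
by rewrite leq_subRL // ltnW.
Qed.

Lemma vline_obj_nonperp u : is_obj <[u]> -> u \in H /\ s u e != 0.
Proof.
case/and5P => uH u0 _ _ /andP [_].
by rewrite Rad_vline -memvE -dimv_eq0 mem_perp_p eqn0Ngt u0 memvE.
Qed.

Lemma is_obj_line u v : u \in H -> v \in H -> s u e != 0 ->
  \dim (<[u]> + <[v]>) = 2%N -> ~~ (R <= <[u]> + <[v]>)%VS -> (4 <= n)%N ->
  is_obj (<[u]> + <[v]>).
Proof.
move=> uH vH ue dL RL n4.
have uL := memv_line_addl u v; have vL := memv_line_addr u v.
apply/and5P; split; rewrite ?dL ?leq_subRL ?(leq_trans _ n4) //.
  by rewrite subv_add -!memvE uH vH.
rewrite (leq_trans (dimvS (Rad_subv s _))) ?dL //=.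
have [uv|uv] := eqVneq (s u v) 0.
  apply: (Rad_nonperp_cond _ ue).
  by rewrite memv_Rad uL mem_orthovD !mem_orthov1 s_alt uv eqxx.
by have := dim_Rad_pair s_alt uL vL uv; rewrite dL ltnS ltnS leqn0 dimv_eq0 => ->.
Qed.

Lemma is_obj_odd W m r : (W <= H)%VS -> (\dim W <= m.*2.+1)%N ->
  (m.*2.+1 <= n - 2)%N -> (\dim (Rad s W) + m.*2 <= \dim W)%N ->
  r \in Rad s W -> s r e != 0 -> is_obj W /\ \dim W = m.*2.+1.
Proof.
move=> WH dW dn dRW rRW re.
have dRW1 : (0 < \dim (Rad s W))%N.
  by rewrite lt0n dimv_eq0; apply: contraTneq rRW => ->; rewrite memv0 nonperp_neq0.
have dWE : \dim W = m.*2.+1.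
  by apply/eqP; rewrite eqn_leq dW (leq_trans _ dRW) // -add1n leq_add2r.
split => //; apply: is_obj_of_Rad rRW re => //; first by rewrite dWE.
by rewrite -(leq_add2r m.*2) (leq_trans dRW) // dWE add1n.
Qed.

Definition plane_obj W := is_obj W /\ \dim W = 3%N.

Lemma plane_obj_pair W x y r : (W <= H)%VS -> (\dim W <= 3)%N -> (5 <= n)%N ->
  x \in W -> y \in W -> s x y != 0 -> r \in Rad s W -> s r e != 0 -> plane_obj W.
Proof.
move=> WH dW n5 xW yW xy; apply: (@is_obj_odd W 1) => //.
  by rewrite leq_subRL // (leq_trans _ n5).
by rewrite addn2; apply: dim_Rad_pair xW yW xy.
Qed.

Lemma is_obj_dim5 W x1 y1 x2 y2 r : (W <= H)%VS -> (\dim W <= 5)%N -> (7 <= n)%N ->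
  x1 \in W -> y1 \in W -> s x1 y1 != 0 ->
  x2 \in (W :&: orthov s <[x1]> :&: orthov s <[y1]>)%VS ->
  y2 \in (W :&: orthov s <[x1]> :&: orthov s <[y1]>)%VS -> s x2 y2 != 0 ->
  r \in Rad s W -> s r e != 0 -> is_obj W /\ \dim W = 5%N.
Proof.
move=> WH dW n7 x1W y1W xy1 x2W y2W xy2; apply: (@is_obj_odd W 2) => //.
  by rewrite leq_subRL // (leq_trans _ n7).
rewrite -(Rad_cap_orthov_pair s_alt x1W y1W xy1).
rewrite -(dim_cap_orthov_pair s_alt x1W y1W xy1).
by rewrite -[2.*2]/(2 + 2)%N addnA !addn2 !ltnS (dim_Rad_pair s_alt x2W y2W xy2).
Qed.

Lemma adj_is_obj U W : adj U W -> is_obj U /\ is_obj W.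
Proof. by case/and3P. Qed.

Lemma path_adj_is_obj (X0 : {vspace vT}) c :
  path adj X0 c -> {in c, forall X, is_obj X}.
Proof.
elim: c X0 => //= Y c IH X0 /andP [X0Y Yc] X; rewrite inE => /predU1P [->|Xc].
  by case: (adj_is_obj X0Y).
exact: IH _ Yc X Xc.
Qed.

Lemma adj_subv U W : adj U W -> (\dim U < \dim W)%N -> (U <= W)%VS.
Proof.
case/and3P => _ _ /andP [_ /orP [/andP [_ UW]|/andP [ltWU _]]] ltUW.
  by move: UW; rewrite /inc_lt; case: ifP => // _ /andP [].
by rewrite ltnNge ltnW in ltWU.
Qed.

Lemma adj_odd U W : is_obj U -> is_obj W -> (\dim U < \dim W)%N -> odd (\dim W) ->
  (U <= W)%VS -> adj U W.
Proof.
move=> oU oW ltUW oddW UW; rewrite /adj /incident oU oW ltUW /inc_lt oddW UW /= andbT.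
by apply: contraTneq ltUW => ->; rewrite ltnn.
Qed.

Lemma adj_vline_line u L : is_obj <[u]> -> is_obj L -> \dim L = 2%N ->
  s u e != 0 -> u \in L -> adj <[u]>%VS L.
Proof.
move=> ou oL dL ue uL; have ltuL : (\dim <[u]>%VS < \dim L)%N.
  by rewrite dim_vline nonperp_neq0 // dL.
rewrite /adj /incident ou oL ltuL /inc_lt dL /= -memvE uL /=.
apply/andP; split; first by apply: contraTneq ltuL => ->; rewrite ltnn.
apply/orP; left; rewrite -subv0; apply/subvP => y.
case/memv_capP => /vlineP [k ->] /(subvP (Rad_subv s _)).
rewrite memv_cap mem_perp_p linearZl_LR /= mulf_eq0 (negPf ue) orbF.
by case/andP => _ /eqP ->; rewrite scale0r mem0v.
Qed.

Lemma hrel_cone_odd W (X0 : {vspace vT}) c : path adj X0 c -> last X0 c = X0 ->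
  is_obj W -> odd (\dim W) ->
  {in c, forall X, (\dim X < \dim W)%N /\ (X <= W)%VS} -> hrel (X0 :: c) [:: X0].
Proof.
case: c => [|Y c] xc cx oW oddW cW; first exact: rt_refl.
have := hrel_cone (W := W) [::] [::] xc cx; rewrite cats0; apply; apply/allP => X.
rewrite -{1}cx /= => /predU1P XYc.
have {XYc} Xc : X \in Y :: c by case: XYc => [->|//]; apply: mem_last.
have [ltW sW] := cW _ Xc; exact: adj_odd (path_adj_is_obj xc Xc) oW ltW oddW sW.
Qed.

Definition vtriangle u1 u2 u3 : seq {vspace vT} :=
  [:: <[u1]> + <[u2]>; <[u2]>; <[u2]> + <[u3]>; <[u3]>; <[u3]> + <[u1]>; <[u1]>]%VS.

Lemma vtriangle_cone_odd u1 u2 u3 W : path adj <[u1]>%VS (vtriangle u1 u2 u3) ->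
  is_obj W -> odd (\dim W) -> (3 <= \dim W)%N -> (<[u1]> + <[u2]> + <[u3]> <= W)%VS ->
  hrel (<[u1]>%VS :: vtriangle u1 u2 u3) [:: <[u1]>%VS].
Proof.
move=> tri oW oddW dW; rewrite !subv_add => /andP [/andP [u1W u2W] u3W].
have dline u v : (\dim (<[u]> + <[v]>)%VS < \dim W)%N.
  by rewrite (leq_trans _ dW) // ltnS dim_addv_vline_le2.
have dpt u : (\dim <[u]>%VS < \dim W)%N.
  by rewrite dim_vline (leq_trans _ dW) // ltnS (leq_trans (leq_b1 _)).
have cW : all (fun X => (\dim X < \dim W)%N && (X <= W)%VS) (vtriangle u1 u2 u3).
  by rewrite /= !dline !dpt !subv_add u1W u2W u3W.
by apply: (hrel_cone_odd (W := W)) => // X /(allP cW) /andP.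
Qed.

Lemma obj_dim_le W : is_obj W -> (\dim W + 2 <= n)%N.
Proof.
case/and5P => _ dW1 dWn _ _.
have n3 : (2 < n)%N by rewrite -subn_gt0 (leq_trans dW1 dWn).
by rewrite addnC -leq_subRL // ltnW.
Qed.

Lemma adj_plane X W : plane_obj W -> is_obj X -> (\dim X <= 2)%N -> (X <= W)%VS ->
  adj X W.
Proof. by move=> [oW dW] oX dX XW; apply: adj_odd; rewrite ?dW. Qed.

Lemma spoke_is_obj u v L : u \in H -> s u e != 0 -> v \in H -> u \in L ->
  (\dim L <= 2)%N -> plane_obj (L + <[v]>) ->
  is_obj (<[u]> + <[v]>) /\ \dim (<[u]> + <[v]>) = 2%N.
Proof.
move=> uH ue vH uL dL [oW dW].
have vL : v \notin L.
  apply/negP => vL; suff: (\dim (L + <[v]>) <= \dim L)%N by rewrite dW leqNgt ltnS dL.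
  by rewrite dimvS // subv_add subvv -memvE.
have vu : v \notin <[u]>%VS by apply: contra vL; apply/subvP; rewrite -memvE.
have dM := dim_vline2 (nonperp_neq0 ue) vu; split => //.
apply: is_obj_line => //.
  have MW : (<[u]> + <[v]> <= L + <[v]>)%VS by rewrite addvS // -memvE.
  by case/and5P: oW => _ _ _ + _; apply: contra => /subv_trans; apply.
by rewrite (leq_trans _ (obj_dim_le oW)) // dW.
Qed.

Lemma vtriangle_cone_point u1 u2 u3 v : path adj <[u1]>%VS (vtriangle u1 u2 u3) ->
  v \in H -> s v e != 0 -> plane_obj (<[u1]> + <[u2]> + <[v]>) ->
  plane_obj (<[u2]> + <[u3]> + <[v]>) -> plane_obj (<[u3]> + <[u1]> + <[v]>) ->
  hrel (<[u1]>%VS :: vtriangle u1 u2 u3) [:: <[u1]>%VS].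
Proof.
move=> tri vH ve pW1 pW2 pW3.
have n5 : (5 <= n)%N by rewrite (leq_trans _ (obj_dim_le pW1.1)) // pW1.2.
have oX := path_adj_is_obj tri.
have [o1 o2 o3] : [/\ is_obj <[u1]>, is_obj <[u2]> & is_obj <[u3]>].
  by split; apply: oX; rewrite !inE eqxx ?orbT.
have [oL1 oL2 oL3] : [/\ is_obj (<[u1]> + <[u2]>), is_obj (<[u2]> + <[u3]>)
    & is_obj (<[u3]> + <[u1]>)].
  by split; apply: oX; rewrite !inE eqxx ?orbT.
have [u1H f1] := vline_obj_nonperp o1; have [u2H f2] := vline_obj_nonperp o2.
have [u3H f3] := vline_obj_nonperp o3.
have oPv : is_obj <[v]> by rewrite is_obj_vline ?(leq_trans _ n5).
have spoke u w : u \in H -> s u e != 0 -> plane_obj (<[u]> + <[w]> + <[v]>) ->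
    is_obj (<[u]> + <[v]>) /\ \dim (<[u]> + <[v]>) = 2%N.
  move=> uH ue pW.
  exact: spoke_is_obj uH ue vH (memv_line_addl _ _) (dim_addv_vline_le2 _ _) pW.
have [oM1 dM1] := spoke _ _ u1H f1 pW1; have [oM2 dM2] := spoke _ _ u2H f2 pW2.
have [oM3 dM3] := spoke _ _ u3H f3 pW3.
have dP u : (\dim <[u]>%VS <= 2)%N by rewrite dim_vline (leq_trans (leq_b1 _)).
have [[s1a s1b s1v] [s1ab s1av s1bv]] := subv_addv_vline3 u1 u2 v.
have [[s2a s2b s2v] [s2ab s2av s2bv]] := subv_addv_vline3 u2 u3 v.
have [[s3a s3b s3v] [s3ab s3av s3bv]] := subv_addv_vline3 u3 u1 v.
apply: (hrel_hexagon (Pv := <[v]>%VS) (M1 := (<[u1]> + <[v]>)%VS)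
  (M2 := (<[u2]> + <[v]>)%VS) (M3 := (<[u3]> + <[v]>)%VS)
  (W1 := (<[u1]> + <[u2]> + <[v]>)%VS) (W2 := (<[u2]> + <[u3]> + <[v]>)%VS)
  (W3 := (<[u3]> + <[u1]> + <[v]>)%VS) tri).
- by split; apply: adj_vline_line; rewrite ?memv_line_addl.
- by split; rewrite adjC; apply: adj_vline_line; rewrite ?memv_line_addr.
- by rewrite /= !(adj_plane pW1) ?dP ?dim_addv_vline_le2.
- by rewrite /= !(adj_plane pW2) ?dP ?dim_addv_vline_le2.
- by rewrite /= !(adj_plane pW3) ?dP ?dim_addv_vline_le2.
Qed.

Lemma mem_addv_R_notsubv U V t : ~~ (R <= U)%VS -> (V <= U)%VS -> t \in U ->
  t \in (V + R)%VS -> t \in V.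
Proof.
move=> RU VU tU /memv_addP [v vV [r rR tE]].
have rU : r \in U by rewrite -(addKr v r) -tE rpredD ?rpredN ?(subvP VU _ vV).
by rewrite tE (mem_R_notsubv RU rR rU) addr0.
Qed.

Lemma decomp_vline3_R u1 u2 u3 : u1 != 0 -> u2 \notin <[u1]>%VS ->
  u3 \notin (<[u1]> + <[u2]>)%VS -> ~~ (R <= <[u1]> + <[u2]>)%VS ->
  ~~ (R <= <[u2]> + <[u3]>)%VS -> ~~ (R <= <[u3]> + <[u1]>)%VS ->
  (R <= <[u1]> + <[u2]> + <[u3]>)%VS ->
  exists a b r, [/\ u3 = a *: u1 + b *: u2 + r, r \in R, a != 0 & b != 0].
Proof.
move=> u10 u21 u3L RL1 RL2 RL3 RT.
have rR : vpick R \in R := memv_pick R; set r := vpick R in rR.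
have rL : r \notin (<[u1]> + <[u2]>)%VS.
  by apply: contra RL1; apply: R_subv_of_mem rR R_neq0.
have TE : (<[u1]> + <[u2]> + <[r]>)%VS = (<[u1]> + <[u2]> + <[u3]>)%VS.
  apply/eqP; rewrite eqEdim subv_add addvSl -memvE (subvP RT) //=.
  by rewrite !dim_addv_line // dim_vline2.
have : u3 \in (<[u1]> + <[u2]> + <[r]>)%VS by rewrite TE; apply/memv_addr/memv_line.
case/memv_addP => _ /memv_addP [_ /vlineP [a ->] [_ /vlineP [b ->] ->]].
case=> _ /vlineP [k ->] u3E; exists a, b, (k *: r); split; rewrite ?memvZ //.
(* a zero coefficient would put [k *: r] on a side, hence [u3] on [L1] *)
- apply: contraNneq u3L => a0; move: u3E; rewrite a0 scale0r add0r => u3E.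
  have kr0 : k *: r = 0.
    apply: mem_R_notsubv RL2 (memvZ k rR) _.
    rewrite -[k *: r](addKr (b *: u2)) -u3E.
    by rewrite rpredD ?rpredN ?memvZ ?memv_line_addl ?memv_line_addr.
  by rewrite u3E kr0 addr0; apply/memv_addr; rewrite memvZ ?memv_line.
- apply: contraNneq u3L => b0; move: u3E; rewrite b0 scale0r addr0 => u3E.
  have kr0 : k *: r = 0.
    apply: mem_R_notsubv RL3 (memvZ k rR) _.
    rewrite -[k *: r](addKr (a *: u1)) -u3E.
    by rewrite rpredD ?rpredN ?memvZ ?memv_line_addl ?memv_line_addr.
  by rewrite u3E kr0 addr0; apply/memv_addl; rewrite memvZ ?memv_line.
Qed.

Lemma plane_obj_isotropic a b v : a \in H -> b \in H -> v \in H -> s a b = 0 ->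
  (5 <= n)%N -> s v b * s a e - s v a * s b e != 0 -> plane_obj (<[a]> + <[b]> + <[v]>).
Proof.
move=> aH bH vH ab n5 D; have ba : s b a = 0 by rewrite skew_formC ab oppr0.
have [[aW bW vW] _] := subv_addv_vline3 a b v; rewrite -!memvE in aW bW vW.
have WH : (<[a]> + <[b]> + <[v]> <= H)%VS by rewrite !subv_add -!memvE aH bH vH.
pose r := s v b *: a - s v a *: b.
have rRad : r \in Rad s (<[a]> + <[b]> + <[v]>).
  rewrite memv_Rad rpredB ?memvZ //= !mem_orthovD !mem_orthov1.
  rewrite /r !linearBl /= !linearZl_LR /= !s_alt ab ba.
  rewrite (skew_formC s a v) (skew_formC s b v).
  by rewrite -andbA; apply/and3P; split; apply/eqP; ring.
have re : s r e != 0 by rewrite /r linearBl /= !linearZl_LR.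
have [va|va] := eqVneq (s v a) 0.
  have vb : s v b != 0 by apply: contraNneq D => ->; rewrite va !mul0r subr0.
  apply: (plane_obj_pair WH (dim_addv_vline3_le3 _ _ _) n5 bW vW _ rRad re).
  by rewrite herm_eq0C.
apply: (plane_obj_pair WH (dim_addv_vline3_le3 _ _ _) n5 aW vW _ rRad re).
by rewrite herm_eq0C.
Qed.

Lemma is_obj_dim5_isotropic T k1 k2 u y z : (T <= H)%VS -> (\dim T <= 3)%N ->
  (7 <= n)%N -> (T <= orthov s T)%VS -> k1 \in T -> k2 \in T -> u \in T ->
  y \in H -> z \in H -> s k1 e = 0 -> s k2 e = 0 -> s u e != 0 ->
  s k1 y != 0 -> s k2 y = 0 -> s k1 z = 0 -> s k2 z != 0 ->
  is_obj (T + <[y]> + <[z]>) /\ \dim (T + <[y]> + <[z]>) = 5%N.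
Proof.
move=> TH dT n7 TT k1T k2T uT yH zH k1e k2e ue k1y k2y k1z k2z.
set W := (T + <[y]> + <[z]>)%VS.
have iso a b : a \in T -> b \in T -> s a b = 0.
  by move=> aT bT; move/mem_orthovP: (subvP TT a aT); apply.
have TW : (T <= W)%VS by rewrite /W -addvA addvSl.
have yW : y \in W by apply/memv_addl/memv_addr/memv_line.
have zW : z \in W by apply/memv_addr/memv_line.
have WH : (W <= H)%VS by rewrite /W !subv_add TH -!memvE yH zH.
have dW : (\dim W <= 5)%N.
  by rewrite (leq_trans (dim_addv_line2_le _ _ _)) // ltnS ltnS.
have k2W1 : k2 \in (W :&: orthov s <[k1]> :&: orthov s <[y]>)%VS.
  by rewrite !memv_cap (subvP TW) // !mem_orthov1 iso // k2y eqxx.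
have zk1 : s z k1 = 0 by rewrite skew_formC k1z oppr0.
have k2y' : s k2 (z - (s z y / s k1 y) *: k1) != 0.
  by rewrite linearBr /= linearZr_LR /= (iso k2 k1) // mulr0 subr0.
(* [r] is [u] corrected along [k1] and [k2] to become orthogonal to [y] and [z] *)
pose r := u - (s u y / s k1 y) *: k1 - (s u z / s k2 z) *: k2.
have rRad : r \in Rad s W.
  have rT : r \in T by rewrite /r !rpredB ?memvZ.
  rewrite memv_Rad (subvP TW _ rT) /W !mem_orthovD !mem_orthov1 (subvP TT _ rT) /=.
  rewrite /r !linearBl /= !linearZl_LR /= k2y k1z /=.
  by apply/andP; split; apply/eqP; field_nz.
have re : s r e != 0 by rewrite /r !linearBl /= !linearZl_LR /= k1e k2e !mulr0 !subr0.
exact: is_obj_dim5 WH dW n7 (subvP TW _ k1T) yW k1y k2W1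
  (memv_orthov_pair_shift s_alt (subvP TW _ k1T) zW k1y zk1) k2y' rRad re.
Qed.

Definition perp_comb u v := s v e *: u - s u e *: v.

Lemma perp_comb_perp u v : s (perp_comb u v) e = 0.
Proof. by rewrite linearBl /= !linearZl_LR /= mulrC subrr. Qed.

Lemma memv_perp_comb U u v : u \in U -> v \in U -> perp_comb u v \in U.
Proof. by move=> uU vU; rewrite rpredB ?memvZ. Qed.

Lemma perp_comb_notin U u v : s u e != 0 -> u \in U -> v \notin U ->
  perp_comb u v \notin U.
Proof.
move=> ue uU; apply: contra => kU.
rewrite -(scalerK ue v) memvZ // -[_ *: v](subKr (s v e *: u)).
by rewrite rpredD ?rpredN ?memvZ.
Qed.

Lemma adj_point_line P L : \dim P = 1%N -> \dim L = 2%N -> adj P L -> (P <= L)%VS.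
Proof. by move=> dP dL /adj_subv; rewrite dP dL; apply. Qed.

Lemma square_null P L Q (L' : {vspace vT}) : \dim P = 1%N -> \dim Q = 1%N ->
  \dim L = 2%N -> \dim L' = 2%N -> path adj P [:: L; Q; L'; P] ->
  hrel [:: P; L; Q; L'; P] [:: P].
Proof.
move=> dP dQ dL dL' sq.
have [PL QL QL' PL'] : [/\ adj P L, adj Q L, adj Q L' & adj P L'].
  by case/and5P: sq => ? ? ? ? _; rewrite (adjC _ _ _ Q L) (adjC _ _ _ P L').
apply: hrel_square => //; have [->|PQ] := eqVneq P Q; [by left | right].
exact: vspace_dim2_uniq PQ dP dQ (adj_point_line dP dL PL)
  (adj_point_line dQ dL QL) (adj_point_line dP dL' PL')
  (adj_point_line dQ dL' QL') dL dL'.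
Qed.

(** * Contracting triangles *)

Section CentralVector.
Variable h0 : vT.
Hypotheses (h0_RH : h0 \in Rad s H) (h0_e : s h0 e != 0).

Lemma h0_H : h0 \in H.
Proof. by move: h0_RH; rewrite memv_Rad => /andP []. Qed.

Lemma h0_orthov_H : h0 \in orthov s H.
Proof. by move: h0_RH; rewrite memv_Rad => /andP []. Qed.

Lemma h0_orthr x : x \in H -> s x h0 = 0.
Proof.
move=> xH; apply/eqP; rewrite herm_eq0C; apply/eqP.
by move/mem_orthovP: h0_orthov_H; apply.
Qed.

Lemma H_orthov_h0 : H = orthov s <[h0]>.
Proof.
have sub : (H <= orthov s <[h0]>)%VS.
  by apply/subvP => x xH; rewrite mem_orthov1 h0_orthr.
have h0R : h0 \notin orthov s fullv.
  by apply: contra h0_e => /mem_orthovP -> //; rewrite memvf.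
have n0 : (0 < n)%N by rewrite dim_H.
have [_] := leqif_dim_orthov1_full s h0 n0; rewrite h0R => /eqP dh0.
by apply/eqP; rewrite eqEdim sub -dh0 dim_H /= leqnn.
Qed.

Lemma exists_separating_vector (X : seq vT) t : (<<X>> <= H :&: perp s p)%VS ->
  t \in (H :&: perp s p)%VS -> t \notin (<<X>> + R)%VS ->
  exists y, [/\ y \in H, s y e != 0, y \in orthov s <<X>> & s t y != 0].
Proof.
rewrite subv_cap memv_cap mem_perp_p => /andP [XH Xp] /andP [tH /eqP te] tXR.
have tX : t \notin orthov s (orthov s <<h0 :: X>>).
  apply: contra tXR => /mem_orthov_orthov_span.
  rewrite span_cons -addvA => /memv_addP [_ /vlineP [c ->] [x xXR tE]].
  (* pairing with [e] kills [<<X>> + R], so the [h0]-coefficient [c] vanishes *)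
  have xe : s x e = 0.
    apply/eqP; rewrite -mem_perp_p; apply: subvP xXR.
    by rewrite subv_add Xp /perp R_sub_orthov.
  move: te; rewrite tE linearDl /= linearZl_LR /= xe addr0 => /eqP.
  by rewrite mulf_eq0 (negPf h0_e) orbF => /eqP c0; rewrite c0 scale0r add0r.
have /mem_orthovPn [y yo ty] := tX.
move: yo; rewrite span_cons mem_orthovD -H_orthov_h0 => /andP [yH yX].
have h0X : h0 \in orthov s <<X>> := subvP (orthovS s XH) _ h0_orthov_H.
have [ye|ye] := eqVneq (s y e) 0; last by exists y.
exists (y + h0); split; rewrite ?rpredD ?h0_H //.
  by rewrite linearDl /= ye add0r.
by rewrite linearDr /= h0_orthr // addr0.
Qed.

Lemma plane_obj_hyperbolic a b : a \in H -> b \in H -> s a b != 0 -> (5 <= n)%N ->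
  plane_obj (<[a]> + <[b]> + <[h0]>).
Proof.
move=> aH bH ab n5; have [[aW bW h0W] _] := subv_addv_vline3 a b h0.
rewrite -!memvE in aW bW h0W.
have WH : (<[a]> + <[b]> + <[h0]> <= H)%VS by rewrite !subv_add -!memvE aH bH h0_H.
apply: (plane_obj_pair WH (dim_addv_vline3_le3 _ _ _) n5 aW bW ab _ h0_e).
by rewrite memv_Rad h0W (subvP (orthovS s WH) _ h0_orthov_H).
Qed.

Lemma exists_perp_comb_witness u1 u2 : u1 \in H -> u2 \in H -> s u1 e != 0 ->
  u2 \notin <[u1]>%VS -> ~~ (R <= <[u1]> + <[u2]>)%VS ->
  exists v, [/\ v \in H, s v e != 0 & s (perp_comb u1 u2) v != 0].
Proof.
move=> u1H u2H f1 u21 RL; pose k := perp_comb u1 u2.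
have kHp : k \in (H :&: perp s p)%VS.
  by rewrite memv_cap mem_perp_p perp_comb_perp eqxx andbT memv_perp_comb.
have kL : k \in (<[u1]> + <[u2]>)%VS.
  exact: memv_perp_comb (memv_line_addl _ _) (memv_line_addr _ _).
have k0 : k != 0.
  have := perp_comb_notin f1 (memv_line u1) u21; rewrite -/k.
  by apply: contraNneq => ->; rewrite mem0v.
have kR : k \notin (<<[::]>> + R)%VS.
  by rewrite span_nil add0v; apply: contra RL => kR; apply: R_subv_of_mem kR k0 kL.
have X0 : (<<[::]>> <= H :&: perp s p)%VS by rewrite span_nil sub0v.
by have [v [vH ve _ kv]] := exists_separating_vector X0 kHp kR; exists v.
Qed.

Lemma exists_cone_point u1 u2 u3 : u1 \in H -> u2 \in H -> u3 \in H ->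
  s u1 e != 0 -> u2 \notin <[u1]>%VS -> u3 \notin (<[u1]> + <[u2]>)%VS ->
  ~~ (R <= <[u1]> + <[u2]>)%VS -> ~~ (R <= <[u2]> + <[u3]>)%VS ->
  ~~ (R <= <[u3]> + <[u1]>)%VS -> (R <= <[u1]> + <[u2]> + <[u3]>)%VS -> (5 <= n)%N ->
  exists2 v, v \in H /\ s v e != 0 & [/\ plane_obj (<[u1]> + <[u2]> + <[v]>),
    plane_obj (<[u2]> + <[u3]> + <[v]>) & plane_obj (<[u3]> + <[u1]> + <[v]>)].
Proof.
move=> u1H u2H u3H f1 u21 u3L RL1 RL2 RL3 RT n5.
have [a [b [r [u3E rR a0 b0]]]] :=
  decomp_vline3_R (nonperp_neq0 f1) u21 u3L RL1 RL2 RL3 RT.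
have su3 x : s x u3 = a * s x u1 + b * s x u2.
  by rewrite u3E !linearDr /= !linearZr_LR /= (R_orthr x rR) addr0.
have s3u x : s u3 x = a * s u1 x + b * s u2 x.
  by rewrite u3E !linearDl /= !linearZl_LR /= (R_orthl x rR) addr0.
have [u12|u12] := eqVneq (s u1 u2) 0; last first.
  have u21' : s u2 u1 != 0 by rewrite herm_eq0C.
  exists h0; first by split; rewrite ?h0_H.
  split; apply: plane_obj_hyperbolic => //.
    by rewrite su3 s_alt mulr0 addr0 mulf_neq0.
  by rewrite s3u s_alt mulr0 add0r mulf_neq0.
have [v [vH ve kv]] := exists_perp_comb_witness u1H u2H f1 u21 RL1.
have u21z : s u2 u1 = 0 by rewrite skew_formC u12 oppr0.
have D12 : s v u2 * s u1 e - s v u1 * s u2 e = s (perp_comb u1 u2) v.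
  rewrite /perp_comb linearBl /= !linearZl_LR /= (skew_formC s u1 v).
  by rewrite (skew_formC s u2 v); ring.
have u23 : s u2 u3 = 0 by rewrite su3 s_alt u21z !mulr0 addr0.
have u31 : s u3 u1 = 0 by rewrite s3u s_alt u21z !mulr0 addr0.
have D23 : s v u3 * s u2 e - s v u2 * s u3 e = - a * s (perp_comb u1 u2) v.
  by rewrite su3 s3u -D12; ring.
have D31 : s v u1 * s u3 e - s v u3 * s u1 e = - b * s (perp_comb u1 u2) v.
  by rewrite su3 s3u -D12; ring.
exists v => //; split; apply: plane_obj_isotropic => //.
- by rewrite D12.
- by rewrite D23 mulf_neq0 ?oppr_eq0.
- by rewrite D31 mulf_neq0 ?oppr_eq0.
Qed.

Lemma is_obj_dim5_Rad T w y a b : (T <= H)%VS -> (\dim T <= 3)%N -> (7 <= n)%N ->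
  w \in Rad s T -> y \in H -> s w y != 0 -> a \in T -> b \in T -> s a b != 0 ->
  is_obj (T + <[y]> + <[h0]>) /\ \dim (T + <[y]> + <[h0]>) = 5%N.
Proof.
move=> TH dT n7 wRT yH wy aT bT ab; set W := (T + <[y]> + <[h0]>)%VS.
move: wRT; rewrite memv_Rad => /andP [wT /mem_orthovP wo].
have ow x : x \in T -> s x w = 0 by move=> xT; rewrite skew_formC wo // oppr0.
have TW : (T <= W)%VS by rewrite /W -addvA addvSl.
have yW : y \in W by apply/memv_addl/memv_addr/memv_line.
have h0W : h0 \in W by apply/memv_addr/memv_line.
have WH : (W <= H)%VS by rewrite /W !subv_add TH -!memvE yH h0_H.
have dW : (\dim W <= 5)%N.
  by rewrite (leq_trans (dim_addv_line2_le _ _ _)) // ltnS ltnS.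
have shift x : x \in T ->
    x - (s x y / s w y) *: w \in (W :&: orthov s <[w]> :&: orthov s <[y]>)%VS.
  by move=> xT; apply: memv_orthov_pair_shift; rewrite ?(subvP TW) ?ow.
have ab' : s (a - (s a y / s w y) *: w) (b - (s b y / s w y) *: w) != 0.
  rewrite !linearBl !linearBr /= !linearZl_LR !linearZr_LR /=.
  by rewrite (ow a aT) (wo b bT) s_alt !mulr0 !subr0.
have h0RW : h0 \in Rad s W by rewrite memv_Rad h0W (subvP (orthovS s WH) _ h0_orthov_H).
exact: is_obj_dim5 WH dW n7 (subvP TW _ wT) yW wy (shift a aT) (shift b bT) ab'
  h0RW h0_e.
Qed.

Lemma Rad_H_plane : (R + <[h0]> <= Rad s H)%VS /\ \dim (R + <[h0]>) = 2%N.
Proof.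
have RRH : (R <= Rad s H)%VS by rewrite subv_cap R_sub_H R_sub_orthov.
have h0R : h0 \notin R by apply: contra h0_e => /R_orthl ->.
by rewrite subv_add RRH -memvE h0_RH dim_addv_line // dim_R.
Qed.

Lemma exists_Rad_nonperp_n5 T : n = 5%N -> (T <= H)%VS -> \dim T = 3%N ->
  ~~ (R <= T)%VS -> exists2 h, h \in Rad s T & s h e != 0.
Proof.
move=> n5 TH dT RT; have [ZRH dZ] := Rad_H_plane; set Z := (R + <[h0]>)%VS in ZRH dZ.
have ZH : (Z <= H)%VS := subv_trans ZRH (Rad_subv s H).
have dH : \dim H = 4%N by move: dim_H; rewrite n5 => -[].
have TZ0 : (T :&: Z)%VS != 0%VS.
  apply/eqP => TZ0; have := dimvS (_ : T + Z <= H)%VS; rewrite subv_add TH ZH.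
  by rewrite dimv_disjoint_sum // dT dZ dH => /(_ isT).
have /memv_capP [hT hZ] := memv_pick (T :&: Z); set h := vpick _ in hT hZ.
have h0' : h != 0 by rewrite vpick0.
have hRH := subvP ZRH _ hZ; move: (hRH); rewrite memv_Rad => /andP [_ hoH].
exists h; first by rewrite memv_Rad hT (subvP (orthovS s TH)).
by apply: contra RT => /eqP he; apply: R_subv_of_mem (Rad_H_perp_sub_R hRH he) h0' hT.
Qed.

(* Otherwise [H = T + R + <[h0]>] would be totally isotropic, and then
   [H :&: orthov <[e]>], of dimension at least 3, would lie in [R]. *)
Lemma not_isotropic_dim3_n5 T : n = 5%N -> (T <= H)%VS -> \dim T = 3%N ->
  ~~ (R <= T)%VS -> ~~ (T <= orthov s T)%VS.
Proof.
move=> n5 TH dT RT; apply/negP => TT.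
have [ZRH dZ] := Rad_H_plane; set Z := (R + <[h0]>)%VS in ZRH dZ.
have ZoH : (Z <= orthov s H)%VS := subv_trans ZRH (capvSr _ _).
have ZH : (Z <= H)%VS := subv_trans ZRH (Rad_subv s H).
have dH : \dim H = 4%N by move: dim_H; rewrite n5 => -[].
have dTZ : (\dim (T :&: Z) <= 1)%N.
  rewrite leqNgt; apply: contra RT => dTZ.
  have ZT : (Z <= T)%VS.
    have /eqP <- : (T :&: Z)%VS == Z by rewrite eqEdim capvSr dZ.
    exact: capvSl.
  exact: subv_trans (addvSl R <[h0]>) ZT.
have TZE : (T + Z)%VS = H.
  apply/eqP; rewrite eqEdim subv_add TH ZH /= dH.
  have := dimv_sum_cap T Z; rewrite dT dZ => sum5.
  by rewrite -(leq_add2r (\dim (T :&: Z))) sum5 addnC -[(3 + 2)%N]/(1 + 4)%N leq_add2r.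
have Hiso : (H <= orthov s H)%VS.
  have ZoT : (Z <= orthov s T)%VS := subv_trans ZoH (orthovS s TH).
  have ZoZ : (Z <= orthov s Z)%VS := subv_trans ZoH (orthovS s ZH).
  have ToZ : (T <= orthov s Z)%VS by rewrite orthov_sym.
  by rewrite -TZE orthovD (subv_add T Z) (subv_add T Z) TT ZoT ToZ ZoZ.
have He : (H :&: orthov s <[e]> <= R)%VS.
  apply/subvP => x /memv_capP [xH]; rewrite mem_orthov1 => /eqP xe.
  by apply: Rad_H_perp_sub_R xe; rewrite memv_Rad xH (subvP Hiso).
by have := leq_trans (leq_dim_orthov1 s e H) (dimvS He); rewrite dH dim_R.
Qed.

Lemma is_obj_dim3_n5 T : n = 5%N -> (T <= H)%VS -> \dim T = 3%N -> ~~ (R <= T)%VS ->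
  is_obj T.
Proof.
move=> n5 TH dT RT; have [h hRT he] := exists_Rad_nonperp_n5 n5 TH dT RT.
have nTT := not_isotropic_dim3_n5 n5 TH dT RT.
have dRT : (\dim (Rad s T) <= 1)%N.
  have : odd (\dim (Rad s T)) by rewrite odd_dim_Rad // dT.
  have : (\dim (Rad s T) <= 3)%N by rewrite -dT dimvS ?Rad_subv.
  have : \dim (Rad s T) != 3%N.
    apply: contra nTT => /eqP dR3; apply/capv_idPl/eqP.
    by rewrite eqEdim Rad_subv dR3 dT.
  by case: (\dim _) => [|[|[|[]]]].
by apply: is_obj_of_Rad TH _ dRT hRT he; rewrite dT n5.
Qed.

Lemma exists_dim5_obj_nonisotropic T u : (T <= H)%VS -> \dim T = 3%N ->
  ~~ (R <= T)%VS -> (7 <= n)%N -> u \in T -> s u e != 0 -> Rad s T != 0%VS ->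
  (Rad s T <= perp s p)%VS -> exists W, [/\ is_obj W, \dim W = 5%N & (T <= W)%VS].
Proof.
move=> TH dT RT n7 uT ue RT0 RTp.
have wRT : vpick (Rad s T) \in Rad s T := memv_pick _; set w := vpick _ in wRT.
have w0 : w != 0 by rewrite vpick0.
have wT : w \in T := subvP (Rad_subv s T) _ wRT.
have uo : u \notin orthov s T.
  apply: contra ue => uo; rewrite -mem_perp_p (subvP RTp) //.
  by rewrite memv_Rad uT.
have /mem_orthovPn [b bT ub] := uo.
have X0 : (<<[::]>> <= H :&: perp s p)%VS by rewrite span_nil sub0v.
have wHp : w \in (H :&: perp s p)%VS by rewrite memv_cap (subvP TH) // (subvP RTp).
have wR : w \notin (<<[::]>> + R)%VS.
  by rewrite span_nil add0v; apply: contra RT => wR; apply: R_subv_of_mem wR w0 wT.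
have [y [yH _ _ wy]] := exists_separating_vector X0 wHp wR.
have [oW dW] := is_obj_dim5_Rad TH (eq_leq dT) n7 wRT yH wy uT bT ub.
by exists (T + <[y]> + <[h0]>)%VS; split; rewrite // -addvA addvSl.
Qed.

Lemma exists_dim5_obj_isotropic u1 u2 u3 :
  let T := (<[u1]> + <[u2]> + <[u3]>)%VS in
  (T <= H)%VS -> s u1 e != 0 -> u2 \notin <[u1]>%VS -> u3 \notin (<[u1]> + <[u2]>)%VS ->
  ~~ (R <= T)%VS -> (T <= orthov s T)%VS -> (7 <= n)%N ->
  exists W, [/\ is_obj W, \dim W = 5%N & (T <= W)%VS].
Proof.
move=> T TH f1 u21 u3L RT TT n7.
have [[u1T u2T u3T] [L1T _ _]] := subv_addv_vline3 u1 u2 u3.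
rewrite -!memvE in u1T u2T u3T.
pose k1 := perp_comb u1 u2; pose k2 := perp_comb u1 u3.
have k1T : k1 \in T by apply: memv_perp_comb.
have k2T : k2 \in T by apply: memv_perp_comb.
have k1L : k1 \in (<[u1]> + <[u2]>)%VS.
  exact: memv_perp_comb (memv_line_addl _ _) (memv_line_addr _ _).
have k2L : k2 \notin (<[u1]> + <[u2]>)%VS.
  exact: perp_comb_notin f1 (memv_line_addl _ _) u3L.
have k10 : k1 != 0.
  have := perp_comb_notin f1 (memv_line u1) u21; rewrite -/k1.
  by apply: contraNneq => ->; rewrite mem0v.
have k21 : k2 \notin <[k1]>%VS by apply: contra k2L; apply/subvP; rewrite -memvE.
have k12 : k1 \notin <[k2]>%VS := vline_notin_sym k10 k21.
have kHp k : k \in T -> s k e = 0 -> k \in (H :&: perp s p)%VS.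
  by move=> kT ke; rewrite memv_cap (subvP TH) // mem_perp_p ke eqxx.
have spanHp k : k \in T -> s k e = 0 -> (<<[:: k]>> <= H :&: perp s p)%VS.
  by move=> kT ke; rewrite span_seq1 -memvE kHp.
have kR k k' : k \in T -> k' \in T -> k \notin <[k']>%VS ->
    k \notin (<<[:: k']>> + R)%VS.
  move=> kT k'T kk'; rewrite span_seq1; apply: contra kk'.
  by apply: mem_addv_R_notsubv RT _ kT; rewrite -memvE.
have [k1e k2e] := (perp_comb_perp u1 u2, perp_comb_perp u1 u3).
have [y [yH _ yk2 k1y]] :=
  exists_separating_vector (spanHp _ k2T k2e) (kHp _ k1T k1e) (kR _ _ k1T k2T k12).
have [z [zH _ zk1 k2z]] :=
  exists_separating_vector (spanHp _ k1T k1e) (kHp _ k2T k2e) (kR _ _ k2T k1T k21).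
rewrite span_seq1 mem_orthov1 herm_eq0C in yk2.
rewrite span_seq1 mem_orthov1 herm_eq0C in zk1.
have [oW dW] := is_obj_dim5_isotropic TH (dim_addv_vline3_le3 _ _ _) n7 TT k1T k2T u1T
  yH zH k1e k2e f1 k1y (eqP yk2) (eqP zk1) k2z.
by exists (T + <[y]> + <[z]>)%VS; split; rewrite // -addvA addvSl.
Qed.

Lemma exists_odd_obj_over u1 u2 u3 :
  let T := (<[u1]> + <[u2]> + <[u3]>)%VS in
  (T <= H)%VS -> s u1 e != 0 -> u2 \notin <[u1]>%VS -> u3 \notin (<[u1]> + <[u2]>)%VS ->
  ~~ (R <= T)%VS -> (5 <= n)%N ->
  exists W, [/\ is_obj W, odd (\dim W), (3 <= \dim W)%N & (T <= W)%VS].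
Proof.
move=> T TH f1 u21 u3L RT n5.
have dT : \dim T = 3%N by rewrite dim_addv_line // dim_vline2 ?nonperp_neq0.
have [oT|noT] := boolP (is_obj T); first by exists T; rewrite dT.
have n7 : (7 <= n)%N.
  have [n5E|n5'] := eqVneq n 5%N; first by rewrite is_obj_dim3_n5 in noT.
  by move: odd_n n5 n5'; case: n => [|[|[|[|[|[|[|]]]]]]].
suff [W [oW dW TW]] : exists W, [/\ is_obj W, \dim W = 5%N & (T <= W)%VS].
  by exists W; rewrite dW.
have u1T : u1 \in T by apply/memv_addl/memv_line_addl.
have [dRT|dRT] := leqP (\dim (Rad s T)) 2.
  have dTn : (3 <= n - 2)%N by rewrite leq_subRL // (leq_trans _ n7).
  move: noT; rewrite /is_obj TH dT dTn RT dRT /= negb_or negbK => /andP [RT0 RTp].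
  exact: exists_dim5_obj_nonisotropic TH dT RT n7 u1T f1 RT0 RTp.
apply: exists_dim5_obj_isotropic => //.
by apply/capv_idPl/eqP; rewrite eqEdim capvSl dT; exact: dRT.
Qed.

Lemma vtriangle_null u1 u2 u3 : path adj <[u1]>%VS (vtriangle u1 u2 u3) ->
  u2 \notin <[u1]>%VS -> u3 \notin (<[u1]> + <[u2]>)%VS ->
  hrel (<[u1]>%VS :: vtriangle u1 u2 u3) [:: <[u1]>%VS].
Proof.
move=> tri u21 u3L; have oX := path_adj_is_obj tri.
have [o1 o2 o3] : [/\ is_obj <[u1]>, is_obj <[u2]> & is_obj <[u3]>].
  by split; apply: oX; rewrite !inE eqxx ?orbT.
have [oL1 oL2 oL3] : [/\ is_obj (<[u1]> + <[u2]>), is_obj (<[u2]> + <[u3]>)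
    & is_obj (<[u3]> + <[u1]>)].
  by split; apply: oX; rewrite !inE eqxx ?orbT.
have [u1H f1] := vline_obj_nonperp o1; have [u2H _] := vline_obj_nonperp o2.
have [u3H _] := vline_obj_nonperp o3.
have n5 : (5 <= n)%N.
  have := obj_dim_le oL1; rewrite dim_vline2 ?nonperp_neq0 // leq_eqVlt.
  by case/orP => [/eqP n4|//]; move: odd_n; rewrite -n4.
have RL X : is_obj X -> ~~ (R <= X)%VS by case/and5P.
have TH : (<[u1]> + <[u2]> + <[u3]> <= H)%VS by rewrite !subv_add -!memvE u1H u2H u3H.
have [RT|RT] := boolP (R <= <[u1]> + <[u2]> + <[u3]>)%VS.
  have [v [vH ve] [pW1 pW2 pW3]] :=
    exists_cone_point u1H u2H u3H f1 u21 u3L (RL _ oL1) (RL _ oL2) (RL _ oL3) RT n5.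
  exact: vtriangle_cone_point pW1 pW2 pW3.
have [W [oW oddW dW TW]] := exists_odd_obj_over TH f1 u21 u3L RT n5.
exact: vtriangle_cone_odd oW oddW dW TW.
Qed.

Lemma triangle_null_distinct P1 L1 P2 L2 P3 L3 :
  path adj P1 [:: L1; P2; L2; P3; L3; P1] ->
  [/\ \dim P1 = 1%N, \dim P2 = 1%N & \dim P3 = 1%N] ->
  [/\ \dim L1 = 2%N, \dim L2 = 2%N & \dim L3 = 2%N] ->
  P1 != P2 -> P2 != P3 -> P3 != P1 -> hrel [:: P1; L1; P2; L2; P3; L3; P1] [:: P1].
Proof.
move=> tri [d1 d2 d3] [e1 e2 e3] P12 P23 P31.
have /and5P [a1 a2 a3 a4 /andP [a5 /andP [a6 _]]] := tri.
rewrite adjC in a2; rewrite adjC in a4; rewrite adjC in a6.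
have c11 := adj_point_line d1 e1 a1; have c21 := adj_point_line d2 e1 a2.
have c22 := adj_point_line d2 e2 a3; have c32 := adj_point_line d3 e2 a4.
have c33 := adj_point_line d3 e3 a5; have c13 := adj_point_line d1 e3 a6.
have [u3L|u3L] := boolP (vpick P3 \in L1).
  have c31 : (P3 <= L1)%VS by rewrite (vspace_dim1E d3) -memvE.
  have E2 : L2 = L1 := vspace_dim2_uniq P23 d2 d3 c22 c32 c21 c31 e2 e1.
  have E3 : L3 = L1 := vspace_dim2_uniq P31 d3 d1 c33 c13 c31 c11 e3 e1.
  subst L2 L3; rewrite adjC in a2.
  apply: rt_trans (hrel_catl [:: P1] (hrel_backtrack [:: P3; L1; P1] a2)) _.
  by apply: square_null; rewrite //= !(adjC _ _ _ L1) a1 a4.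
have EL1 := line_through P12 d1 d2 c11 c21 e1.
have EL2 := line_through P23 d2 d3 c22 c32 e2.
have EL3 := line_through P31 d3 d1 c33 c13 e3.
have u21 := vpick_notin P12 d1 d2; rewrite EL1 in u3L.
have E1 := vspace_dim1E d1; have E2 := vspace_dim1E d2; have E3 := vspace_dim1E d3.
set u1 := vpick P1 in E1 EL1 EL3 u21 u3L; set u2 := vpick P2 in E2 EL1 EL2 u21 u3L.
set u3 := vpick P3 in E3 EL2 EL3 u3L; rewrite {1}E1 in u21.
rewrite EL1 EL2 EL3 in tri *; rewrite E1 E2 E3 in tri *.
exact: vtriangle_null tri u21 u3L.
Qed.

Lemma triangle_null_homotopic (X : {vspace vT}) c :
  is_triangle s p H X c -> null_homotopic s p H X c.
Proof.
case=> P1 [P2 [P3 [L1 [L2 [L3 [-> -> tri [d1 d2 d3] [e1 e2 e3]]]]]]].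
have /and5P [a1 a2 a3 a4 /andP [a5 /andP [a6 _]]] := tri.
have [E12|P12] := eqVneq P1 P2.
  subst P2; apply: rt_trans (hrel_backtrack _ a1) _.
  by apply: square_null; rewrite //= a3 a4 a5 a6.
have [E23|P23] := eqVneq P2 P3.
  subst P3; apply: rt_trans (hrel_catl [:: P1; L1] (hrel_backtrack _ a3)) _.
  by apply: square_null; rewrite //= a1 a2 a5 a6.
have [E31|P31] := eqVneq P3 P1.
  subst P3; apply: rt_trans (hrel_catl [:: P1; L1; P2; L2] (hrel_backtrack [::] a5)) _.
  by apply: square_null; rewrite //= a1 a2 a3 a4.
exact: triangle_null_distinct.
Qed.

End CentralVector.

End Geometry.

Unset Implicit Arguments.
Local Close Scope ring_scope.

Theorem lemma4p5 (F : fieldType) (vT : vectType F) (s : {skew_symmetric vT}%R)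
  (p H : {vspace vT}) :
  (forall v : vT, s v v = 0%R) ->
  odd (\dim {:vT}) ->
  (\dim (Rad s fullv) <= 1)%N ->
  \dim p = 1%N ->
  (p :&: Rad s fullv = 0)%VS ->
  (p + H = fullv)%VS -> (p :&: H = 0)%VS ->
  (Rad s fullv <= H)%VS ->
  forall (x : {vspace vT}) (c : seq {vspace vT}),
    is_triangle s p H x c -> null_homotopic s p H x c.
Proof.
(* [p :&: Rad s fullv = 0] is implied by [p :&: H = 0] and [Rad s fullv <= H]. *)
move=> s_alt odd_n dim_R dim_p _ pH capH RH x c.
have [h0 h0RH h0e] := exists_Rad_H_nonperp s_alt odd_n dim_p pH capH RH.
exact: triangle_null_homotopic s_alt odd_n dim_R dim_p pH capH RH h0 h0RH h0e x c.
Qed.
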